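(* Let $p$ be an odd prime, $q$ a power of $p$, $\xi$ a generator of $\mathbb F_q^*$, $\ell$ an odd prime with $\ell\ne p$ and $\ell\mid q-1$, and $m,n$ positive integers. Let $\ell^u$ exactly divide $q-1$, $v=\min\{m,u\}$, $\zeta=\xi^{(q-1)/\ell^v}$, and let $C$ be a $\lambda$-constacyclic code of length $2\ell^mp^n$ over $\mathbb F_q$, $\lambda\in\mathbb F_q^*$. Empty products are $1$. (I) If $c_1\in\mathbb F_q^*$, $c_1^{2\ell^mp^n}\lambda=1$ and $C=\big\langle\prod_{i=0}^{\ell^v-1}(X-c_1^{-1}\zeta^i)^{\varepsilon_i}(X+c_1^{-1}\zeta^i)^{\epsilon_i}\prod_{j=1}^{m-u}\prod_{1\le k\le\ell^v,\,\ell\nmid k}(X^{\ell^j}-c_1^{-\ell^j}\zeta^k)^{\tau_k^j}(X^{\ell^j}+c_1^{-\ell^j}\zeta^k)^{\sigma_k^j}\big\rangle$ with all exponents in $[0,p^n]$, then $$C^\perp=\Big\langle\prod_{i=0}^{\ell^v-1}(X-c_1\zeta^{-i})^{p^n-\varepsilon_i}(X+c_1\zeta^{-i})^{p^n-\epsilon_i}\prod_{j=1}^{m-u}\prod_{\substack{k=1\\\ell\nmid k}}^{\ell^v}(X^{\ell^j}-c_1^{\ell^j}\zeta^{-k})^{p^n-\tau_k^j}(X^{\ell^j}+c_1^{\ell^j}\zeta^{-k})^{p^n-\sigma_k^j}\Big\rangle.$$ (II.A) If $m\le u$, $c_2\in\mathbb F_q^*$, $c_2^{2\ell^mp^n}\lambda=\xi^{\ell^vp^n}$,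 $\alpha=\xi^{(q-1)/\ell^m}$ and $C=\langle\prod_{i=0}^{\ell^m-1}(X^2-c_2^{-2}\xi\alpha^i)^{\varepsilon_i}\rangle$ with $0\le\varepsilon_i\le p^n$, then $C^\perp=\langle\prod_{i=0}^{\ell^m-1}(X^2-c_2^{2}\xi^{-1}\alpha^{-i})^{p^n-\varepsilon_i}\rangle$. (II.B) If $m>u$, $c_2\in\mathbb F_q^*$, $c_2^{2\ell^mp^n}\lambda=\xi^{\ell^vp^n}$, $\beta$ is the element of $\langle\xi^{\ell^u}\rangle$ with $\beta^{\ell^m}\xi^{\ell^u}=1$, and $C=\big\langle\prod_{i=0}^{\ell^u-1}(X^2-c_2^{-2}\beta^{-1}\zeta^i)^{\varepsilon_i}\prod_{j=1}^{m-u}\prod_{1\le k\le\ell^u,\,\ell\nmid k}(X^{2\ell^j}-c_2^{-2\ell^j}\beta^{-\ell^j}\zeta^k)^{\sigma_k^j}\big\rangle$ with exponents in $[0,p^n]$, then $$C^\perp=\Big\langle\prod_{i=0}^{\ell^u-1}(X^2-c_2^{2}\beta\zeta^{-i})^{p^n-\varepsilon_i}\prod_{j=1}^{m-u}\prod_{\substack{k=1\\\ell\nmid k}}^{\ell^u}(X^{2\ell^j}-c_2^{2\ell^j}\beta^{\ell^j}\zeta^{-k})^{p^n-\sigma_k^j}\Big\rangle.$$ (III) Suppose $1\le j\le 2\ell^v-1$, $j\ne\ell^v$, $d_1\in\mathbb F_q^*$ with $d_1^{2\ell^mp^n}\lambda=\xi^{jp^n}$, $j=y\ell^z$ with $\gcd(y,\ell)=1$,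 $0\le z\le v-1$, and $\delta=\xi^{(q-1)/\ell^z}$. (III.A) If $y$ is odd and $C=\langle\prod_{i=0}^{\ell^z-1}(X^{2\ell^{m-z}}-d_1^{-2\ell^{m-z}}\delta^i\xi^y)^{\varepsilon_i}\rangle$ with $0\le\varepsilon_i\le p^n$, then $C^\perp=\langle\prod_{i=0}^{\ell^z-1}(X^{2\ell^{m-z}}-d_1^{2\ell^{m-z}}\delta^{-i}\xi^{-y})^{p^n-\varepsilon_i}\rangle$. (III.B) If $y=2y_0$ and $C=\langle\prod_{i=0}^{\ell^z-1}(X^{\ell^{m-z}}-d_1^{-\ell^{m-z}}\delta^i\xi^{y_0})^{\varepsilon_i}(X^{\ell^{m-z}}+d_1^{-\ell^{m-z}}\delta^i\xi^{y_0})^{\epsilon_i}\rangle$ with $0\le\varepsilon_i,\epsilon_i\le p^n$, then $C^\perp=\langle\prod_{i=0}^{\ell^z-1}(X^{\ell^{m-z}}-d_1^{\ell^{m-z}}\delta^{-i}\xi^{-y_0})^{p^n-\varepsilon_i}(X^{\ell^{m-z}}+d_1^{\ell^{m-z}}\delta^{-i}\xi^{-y_0})^{p^n-\epsilon_i}\rangle$. In each case $C^\perp$ is a $\lambda^{-1}$-constacyclic code.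
   Context: For $\mu\in\mathbb F_q^*$, a $\mu$-constacyclic code of length $N$ over $\mathbb F_q$ is a linear subspace of $\mathbb F_q^N$ closed under $(c_0,\dots,c_{N-1})\mapsto(\mu c_{N-1},c_0,\dots,c_{N-2})$; such codes are identified with ideals of $\mathbb F_q[X]/\langle X^N-\mu\rangle$, and $\langle g(X)\rangle$ denotes the ideal generated by the image of $g(X)$ (in the corresponding quotient ring; for $C^\perp$ the ring is $\mathbb F_q[X]/\langle X^N-\lambda^{-1}\rangle$). $C^\perp$ is the dual code with respect to the standard Euclidean inner product on $\mathbb F_q^N$. $\langle\xi^k\rangle$ denotes the subgroup of $\mathbb F_q^*$ generated by $\xi^k$. *)

From HB Require Import structures.
From mathcomp Require Import all_boot all_order all_algebra all_field.
Set Implicit Arguments. Unset Strict Implicit. Unset Printing Implicit Defensive.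
Import GRing.Theory.
Local Open Scope ring_scope.

Section Codes.
Variables (F : finFieldType) (N : nat).

(* c_k, with the convention c_k = 0 outside 0 <= k < N (never used out of range). *)
Definition coord (c : 'rV[F]_N) (k : nat) : F :=
  if insub k is Some i then c 0 i else 0.

Definition constashift (mu : F) (c : 'rV[F]_N) : 'rV[F]_N :=
  \row_(i < N) (if (i : nat) == 0%N then mu * coord c N.-1 else coord c i.-1).

Definition linear_code (C : {set 'rV[F]_N}) : Prop :=
  0 \in C /\ (forall (a : F) (x y : 'rV[F]_N), x \in C -> y \in C -> a *: x + y \in C).

Definition constacyclic (mu : F) (C : {set 'rV[F]_N}) : Prop :=
  linear_code C /\ (forall c, c \in C -> constashift mu c \in C).

Definition dual_code (C : {set 'rV[F]_N}) : {set 'rV[F]_N} :=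
  [set v | [forall c in C, (c *m v^T) 0 0 == 0]].

(* c (identified with c_0 + c_1 X + ... + c_{N-1} X^{N-1}) lies in the ideal
   generated by the image of g in F[X]/<X^N - mu>. *)
Definition in_ideal (mu : F) (g : {poly F}) (c : 'rV[F]_N) : Prop :=
  exists h : {poly F}, rVpoly c = (g * h) %% ('X^N - mu%:P).

Definition generated_by (mu : F) (g : {poly F}) (C : {set 'rV[F]_N}) : Prop :=
  forall c, c \in C <-> in_ideal mu g c.

End Codes.

(* If g h = X^N - lam, the dual of the constacyclic code <g> is generated by the
   reciprocal polynomial of h.  In each case of the corollary the displayed factors
   of the generator of C, each raised to the power p^n, multiply to X^N - lam:
   over a primitive M-th root of unity z, prod_i (Y - a z^i) = Y^M - a^M; the
   factors with l not dividing k telescope, prod_k (Y^(l^j) - a^(l^j) z^k) being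
   the quotient of Y^(l^(v+j)) - a^(l^(v+j)) by Y^(l^(v+j-1)) - a^(l^(v+j-1));
   and (Y - c)^(p^n) = Y^(p^n) - c^(p^n) in characteristic p.  Hence the cofactor
   h is the same product with exponents p^n - eps, and as the reciprocal of
   X^s - c is -c (X^s - c^-1), the reciprocal of h is, up to a unit, the stated
   generator of the dual. *)
From Pilot Require Import Defs.
From HB Require Import structures.
From mathcomp Require Import all_boot all_order all_algebra all_field.
From mathcomp Require Import zify ring.
Import GRing.Theory.
Local Open Scope ring_scope.

Set Implicit Arguments.
Unset Strict Implicit.
Unset Printing Implicit Defensive.

Section Reciprocal.
Variable F : fieldType.
Implicit Types p q : {poly F}.

(* For size p <= k, [reciprocal k p] is X^(k-1) p(1/X). *)
Definition reciprocal (k : nat) p : {poly F} := \poly_(i < k) p`_(k.-1 - i).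

Definition revp p := reciprocal (size p) p.

Lemma coef_reciprocal k p i :
  (reciprocal k p)`_i = if (i < k)%N then p`_(k.-1 - i) else 0.
Proof. by rewrite coef_poly. Qed.

Lemma reciprocalZ k c p : reciprocal k (c *: p) = c *: reciprocal k p.
Proof.
by apply/polyP=> i; rewrite coefZ !coef_reciprocal coefZ; case: ifP; rewrite ?mulr0.
Qed.

Lemma reciprocalD k p q : reciprocal k (p + q) = reciprocal k p + reciprocal k q.
Proof.
by apply/polyP=> i; rewrite coefD !coef_reciprocal coefD; case: ifP; rewrite ?addr0.
Qed.

Lemma reciprocal_sum k I (r : seq I) (P : pred I) (G : I -> {poly F}) :
  reciprocal k (\sum_(i <- r | P i) G i) = \sum_(i <- r | P i) reciprocal k (G i).
Proof.
apply: big_morph; first exact: reciprocalD.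
by apply/polyP=> i; rewrite coef_reciprocal !coef0 if_same.
Qed.

Lemma reciprocalXn k i : (i < k)%N -> reciprocal k 'X^i = 'X^(k.-1 - i).
Proof.
move=> ik; apply/polyP=> j; rewrite coef_reciprocal !coefXn.
case: ltnP => jk; last by rewrite (_ : (j == _) = false) //; apply/eqP; lia.
by rewrite (_ : (_ == i) = (j == k.-1 - i)%N) //; apply/eqP/eqP; lia.
Qed.

Lemma poly_sum_coef c p : (size p <= c)%N -> p = \sum_(i < c) p`_i *: 'X^i.
Proof. by move=> sp; rewrite -poly_def -[LHS](take_poly_id sp). Qed.

Lemma reciprocal_sum_coef c p : (size p <= c.+1)%N ->
  reciprocal c.+1 p = \sum_(i < c.+1) p`_i *: 'X^(c - i).
Proof.
move=> sp; rewrite {1}(poly_sum_coef sp) reciprocal_sum.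
by apply: eq_bigr => i _; rewrite reciprocalZ reciprocalXn.
Qed.

Lemma reciprocalM a b p q : (size p <= a.+1)%N -> (size q <= b.+1)%N ->
  reciprocal (a + b).+1 (p * q) = reciprocal a.+1 p * reciprocal b.+1 q.
Proof.
move=> sp sq; rewrite (reciprocal_sum_coef sp) (reciprocal_sum_coef sq).
rewrite {1}(poly_sum_coef sp) {1}(poly_sum_coef sq) mulr_suml reciprocal_sum mulr_suml.
apply: eq_bigr => i _; rewrite mulr_sumr reciprocal_sum mulr_sumr; apply: eq_bigr => j _.
have := ltn_ord i; have := ltn_ord j => jb ia.
rewrite -!scalerAl -!scalerAr !scalerA -!exprD reciprocalZ reciprocalXn; last by lia.
by congr (_ *: 'X^_); lia.
Qed.

Lemma reciprocalK k p : (size p <= k)%N -> reciprocal k (reciprocal k p) = p.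
Proof.
move=> sp; apply/polyP=> i; rewrite !coef_reciprocal.
case: ltnP => ik; last by rewrite nth_default // (leq_trans sp).
by rewrite ifT; [congr p`_ _|]; lia.
Qed.

Lemma revp0 : revp 0 = 0.
Proof. by rewrite /revp size_poly0 /reciprocal poly_def big_ord0. Qed.

Lemma revp1 : revp 1 = 1.
Proof.
by rewrite /revp size_poly1; apply/polyP=> i; rewrite coef_reciprocal !coef1; case: i.
Qed.

Lemma revpM p q : revp (p * q) = revp p * revp q.
Proof.
have [->|p0] := eqVneq p 0; first by rewrite mul0r revp0 mul0r.
have [->|q0] := eqVneq q 0; first by rewrite mulr0 revp0 mulr0.
rewrite /revp size_mul //.
case Ep: (size p) p0 => [|a]; first by rewrite -size_poly_eq0 Ep.
case Eq: (size q) q0 => [|b]; first by rewrite -size_poly_eq0 Eq.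
by move=> _ _; rewrite addSn /= addnS reciprocalM ?Ep ?Eq.
Qed.

Lemma revpX p e : revp (p ^+ e) = revp p ^+ e.
Proof. by elim: e => [|e IH]; rewrite ?revp1 // !exprS revpM IH. Qed.

Lemma size_revp p : p`_0 != 0 -> size (revp p) = size p.
Proof. by move=> p00; rewrite /revp size_poly_eq // subnn. Qed.

Lemma revpK p : p`_0 != 0 -> revp (revp p) = p.
Proof. by move=> p00; rewrite {1}/revp size_revp // reciprocalK. Qed.

Lemma reciprocal_revp k p : (size p <= k)%N ->
  reciprocal k p = 'X^(k - size p) * revp p.
Proof.
move=> sp; apply/polyP=> i; rewrite coefXnM !coef_reciprocal.
have [ik|ik] := ltnP i (k - size p).
  by rewrite nth_default ?if_same //; move: sp ik; move: (size p) => s; lia.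
move: sp ik; move: (size p) => s sp ik.
have [ik'|ik'] := ltnP i k; last by rewrite ifF //; apply/negbTE; rewrite -leqNgt; lia.
by rewrite ifT; [congr p`_ _|]; lia.
Qed.

Lemma revp_XnsubC n c : (0 < n)%N -> c != 0 ->
  revp ('X^n - c%:P) = - c *: ('X^n - c^-1%:P).
Proof.
move=> n0 c0; rewrite /revp size_XnsubC // -alg_polyC -scaleNr -(expr0 'X).
rewrite reciprocalD reciprocalZ !reciprocalXn //= subnn subn0.
by rewrite scalerBr scale_polyC mulNr mulfV // expr0 addrC polyCN opprK.
Qed.

Lemma dvdp_reciprocal k (h v : {poly F}) : h`_0 != 0 -> (size v <= k)%N ->
  (h %| reciprocal k v) = (revp h %| v).
Proof.
move=> h00 sv; apply/idP/idP => /dvdpP[b E].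
  rewrite -(reciprocalK sv) E reciprocal_revp; last by rewrite -E size_poly.
  by rewrite revpM mulrA dvdp_mulIr.
rewrite E reciprocal_revp; last by rewrite -E.
by rewrite revpM revpK // mulrA dvdp_mulIr.
Qed.

End Reciprocal.

Section Cofactor.
Variables (F : fieldType) (L : nat) (lam : F) (g h : {poly F}).
Hypotheses (L0 : (0 < L)%N) (gh : g * h = 'X^L - lam%:P).

Lemma cofactor_neq0 : g != 0 /\ h != 0.
Proof.
by apply/andP; rewrite -negb_or -mulf_eq0 gh -size_poly_eq0 size_XnsubC.
Qed.

Lemma size_cofactors : ((size g).-1 + (size h).-1)%N = L.
Proof.
have [g0 h0] := cofactor_neq0.
have := size_XnsubC lam L0; rewrite -gh size_mul //.
move: (size_poly_gt0 g) (size_poly_gt0 h); rewrite g0 h0.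
move: (size g) (size h) => a b; lia.
Qed.

Lemma coef0_cofactor : lam != 0 -> h`_0 != 0.
Proof.
move=> lam0; apply: contra lam0 => /eqP h00; move/(congr1 (horner^~ 0)): gh.
rewrite hornerM [h.[0]]horner_coef0 h00 mulr0 !hornerE -(prednK L0) exprS mul0r.
by rewrite sub0r => /eqP; rewrite eq_sym oppr_eq0.
Qed.

Lemma coef_mul_cofactor (a w : {poly F}) : h %| w -> (size w <= L)%N ->
  (size (a * g)%R <= L)%N -> (a * g * w)`_L.-1 = 0.
Proof.
have [g0 h0] := cofactor_neq0; have sgh := size_cofactors.
case/dvdpP=> b ->{w} sbh sag.
have [->|a0] := eqVneq a 0; first by rewrite !mul0r coef0.
have [->|b0] := eqVneq b 0; first by rewrite !mul0r mulr0 coef0.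
have st : (size (a * b)%R <= L.-1)%N.
  move: sbh sag sgh; rewrite !size_mul //.
  move: (size_poly_gt0 a) (size_poly_gt0 b) (size_poly_gt0 g) (size_poly_gt0 h).
  rewrite a0 b0 g0 h0; move: (size a) (size b) (size g) (size h) => ? ? ? ?; lia.
rewrite mulrACA gh mulrBr coefB coefMXn ltn_predL L0.
by rewrite coefMC nth_default // mul0r subrr.
Qed.

(* Split g w = A + B X^L with deg A, deg B < deg g; then g (w - h B) = A + lam B
   is a multiple of g of smaller degree, hence 0. *)
Lemma dvdp_cofactor (w : {poly F}) : (size w <= L)%N ->
  (forall i, ((size g).-1 <= i < L)%N -> (g * w)`_i = 0) -> h %| w.
Proof.
move=> sw window; have [g0 h0] := cofactor_neq0; have sgh := size_cofactors.
set d := (size g).-1 in window sgh.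
pose A := take_poly d (g * w); pose B := drop_poly L (g * w).
have gwE : g * w = A + B * 'X^L.
  apply/polyP=> i; rewrite coefD coef_take_poly coefMXn coef_drop_poly.
  case: (ltnP i d) => [id|di]; first by rewrite ifT ?addr0 //; lia.
  case: (ltnP i L) => [iL|Li]; first by rewrite add0r window ?di.
  by rewrite add0r subnK.
have sAB : (size (A + lam *: B)%R < size g)%N.
  apply: leq_ltn_trans (size_polyD _ _) _; rewrite gtn_max.
  rewrite (leq_ltn_trans (size_take_poly _ _)) ?(leq_ltn_trans (size_scale_leq _ _)) //=.
    rewrite size_drop_poly (leq_ltn_trans (leq_sub2r _ (size_polyMleq _ _))) //.
    by move: sw sgh (size_poly_gt0 g); rewrite g0 /d; move: (size g) (size w) => ? ?; lia.
  by rewrite /d ltn_predL size_poly_gt0.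
have key : g * (w - h * B) = A + lam *: B.
  by rewrite mulrBr mulrA gh gwE -mul_polyC; ring.
have AB0 : A + lam *: B = 0.
  by apply: contraTeq sAB => AB0; rewrite -leqNgt (dvdp_leq AB0) // -key dvdp_mulIl.
move/eqP: key; rewrite AB0 mulf_eq0 (negbTE g0) subr_eq0 => /eqP ->.
exact: dvdp_mulIl.
Qed.

End Cofactor.

Section ReciprocalCofactor.
Variables (F : fieldType) (K : nat).
Implicit Types P g : {poly F}.

Definition reciprocal_cofactor P g (g' : {poly F}) :=
  exists2 h, g * h = P ^+ K & revp h %= g'.

Lemma reciprocal_cofactor1 : reciprocal_cofactor 1 1 1.
Proof. by exists 1; [rewrite mulr1 expr1n | rewrite revp1 eqpxx]. Qed.

Lemma reciprocal_cofactorM P1 P2 g1 g2 g1' g2' :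
  reciprocal_cofactor P1 g1 g1' -> reciprocal_cofactor P2 g2 g2' ->
  reciprocal_cofactor (P1 * P2) (g1 * g2) (g1' * g2').
Proof.
case=> h1 E1 e1 [h2 E2 e2]; exists (h1 * h2).
  by rewrite mulrACA E1 E2 exprMn.
by rewrite revpM (eqp_trans (eqp_mulr _ e1)) ?eqp_mull.
Qed.

Lemma reciprocal_cofactor_prod (I : eqType) (r : seq I) (Q : pred I)
    (A G G' : I -> {poly F}) :
  (forall i, i \in r -> Q i -> reciprocal_cofactor (A i) (G i) (G' i)) ->
  reciprocal_cofactor (\prod_(i <- r | Q i) A i) (\prod_(i <- r | Q i) G i)
    (\prod_(i <- r | Q i) G' i).
Proof.
move=> rcA; rewrite !(big_seq_cond (fun i => Q i)).
apply: (big_ind3 reciprocal_cofactor reciprocal_cofactor1).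
  by move=> *; exact: reciprocal_cofactorM.
by move=> i /andP[]; exact: rcA.
Qed.

Lemma reciprocal_cofactor_XnsubC n c e : (0 < n)%N -> c != 0 -> (e <= K)%N ->
  reciprocal_cofactor ('X^n - c%:P) (('X^n - c%:P) ^+ e)
    (('X^n - c^-1%:P) ^+ (K - e)).
Proof.
move=> n0 c0 eK; exists (('X^n - c%:P) ^+ (K - e)); first by rewrite -exprD subnKC.
by rewrite revpX revp_XnsubC // eqp_exp // eqp_scale ?oppr_eq0.
Qed.

Lemma reciprocal_cofactor_XnaddC n c e : (0 < n)%N -> c != 0 -> (e <= K)%N ->
  reciprocal_cofactor ('X^n + c%:P) (('X^n + c%:P) ^+ e)
    (('X^n + c^-1%:P) ^+ (K - e)).
Proof.
move=> n0 c0 eK; have := @reciprocal_cofactor_XnsubC n (- c) e n0.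
by rewrite oppr_eq0 invrN !polyCN !opprK; apply.
Qed.

End ReciprocalCofactor.

Section BigNat.
Variables (R : Type) (idx : R).

Lemma big_nat1_cyclic (op : Monoid.com_law idx) (G : nat -> R) M : G M = G 0%N ->
  \big[op/idx]_(1 <= k < M.+1) G k = \big[op/idx]_(i < M) G i.
Proof.
case: M G => [|M] G GM; first by rewrite big_geq // big_ord0.
rewrite big_nat_recr //= GM big_ord_recl Monoid.mulmC; congr (op _ _).
by rewrite big_add1 /= big_mkord.
Qed.

Lemma big_nat_dvdn (op : Monoid.law idx) (G : nat -> R) l M : (0 < l)%N ->
  \big[op/idx]_(1 <= k < (l * M).+1 | (l %| k)%N) G k =
  \big[op/idx]_(1 <= k < M.+1) G (l * k)%N.
Proof.
move=> l0; elim: M => [|M IH]; first by rewrite muln0 !big_geq.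
rewrite big_nat_recr //= -IH mulnS (@big_cat_nat _ _ _ (l * M).+1) //=; last by lia.
congr (op _ _); rewrite big_mkcond big_nat_recr /=; last by lia.
rewrite big1_seq ?Monoid.mul1m ?ifT ?dvdn_add ?dvdn_mulr //.
move=> k /andP[_]; rewrite mem_index_iota; case: ifP => // /dvdnP[t ->].
by rewrite (mulnC t) -mulnS !ltn_pmul2l //; case/andP; lia.
Qed.

End BigNat.

Section Factorizations.
Variable F : fieldType.
Implicit Types (Y T : {poly F}) (a b z : F).

Lemma prod_sub_prim_root M z a Y : M.-primitive_root z ->
  \prod_(i < M) (Y - (a * z ^+ i)%:P) = Y ^+ M - (a ^+ M)%:P.
Proof.
move=> zM; have M0 := prim_order_gt0 zM.
have [->|a0] := eqVneq a 0.
  under eq_bigr do rewrite mul0r subr0.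
  by rewrite prodr_const card_ord expr0n gtn_eqF // subr0.
have := congr1 (comp_poly (a^-1 *: Y)) (factor_Xn_sub_1 zM).
rewrite big_mkord rmorph_prod rmorphB rmorphXn rmorph1 /= comp_polyX => E.
transitivity (\prod_(i < M) (a *: (a^-1 *: Y - (z ^+ i)%:P))).
  by apply: eq_bigr => i _; rewrite scalerBr scalerA mulfV // scale1r scale_polyC.
rewrite scaler_prod prodr_const card_ord.
have -> : \prod_(i < M) (a^-1 *: Y - (z ^+ i)%:P) = (a^-1 *: Y) ^+ M - 1.
  by rewrite -E; apply: eq_bigr => i _; rewrite comp_polyB comp_polyX comp_polyC.
by rewrite scalerBr exprZn scalerA -exprMn mulfV // expr1n scale1r -alg_polyC.
Qed.

Lemma prim_root_neq0 M z : M.-primitive_root z -> z != 0.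
Proof. by move=> zP; rewrite (prim_root_eq0 zP) -lt0n (prim_order_gt0 zP). Qed.

Lemma exprN_odd a n : odd n -> (- a) ^+ n = - a ^+ n.
Proof. by move=> on; rewrite exprNn -signr_odd on expr1 mulN1r. Qed.

Lemma prod_add_prim_root M z a Y : M.-primitive_root z -> odd M ->
  \prod_(i < M) (Y + (a * z ^+ i)%:P) = Y ^+ M + (a ^+ M)%:P.
Proof.
move=> zM oM; have := prod_sub_prim_root (- a) Y zM.
rewrite exprN_odd // polyCN opprK => <-.
by apply: eq_bigr => i _; rewrite mulNr polyCN opprK.
Qed.

Lemma expr_sub_pchar p n c Y : prime p -> p \in [pchar F] ->
  (Y - c%:P) ^+ (p ^ n) = Y ^+ (p ^ n) - (c ^+ (p ^ n))%:P.
Proof.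
move=> pp pF; have pn : [pchar {poly F}].-nat (p ^ n)%N.
  by rewrite (eq_pnat _ (@pchar_poly F)) pnatX pnatE // pF.
by rewrite exprDn_pchar // exprNn_pchar // rmorphXn.
Qed.

Lemma prod_coprime_prim_root l v z b T : (0 < l)%N -> (0 < v)%N ->
  (l ^ v).-primitive_root z ->
  \prod_(1 <= k < (l ^ v).+1 | ~~ (l %| k)%N) (T - (b * z ^+ k)%:P)
    * (T ^+ (l ^ v.-1) - (b ^+ (l ^ v.-1))%:P)
  = T ^+ (l ^ v) - (b ^+ (l ^ v))%:P.
Proof.
move=> l0 v0 zP; pose G k := T - (b * z ^+ k)%:P.
have zlP : (l ^ v.-1).-primitive_root (z ^+ l).
  have := dvdn_prim_root zP (dvdn_exp2l l (leq_pred v)).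
  by rewrite -{2}(prednK v0) expnS mulnK ?expn_gt0 ?l0.
have multiples : \prod_(1 <= k < (l ^ v).+1 | (l %| k)%N) G k
    = T ^+ (l ^ v.-1) - (b ^+ (l ^ v.-1))%:P.
  rewrite -{1}(prednK v0) expnS big_nat_dvdn // big_nat1_cyclic.
    by under eq_bigr do rewrite /G exprM; exact: prod_sub_prim_root.
  by rewrite /G -expnS prednK // (prim_expr_order zP) muln0 expr0.
have all : \prod_(1 <= k < (l ^ v).+1) G k = T ^+ (l ^ v) - (b ^+ (l ^ v))%:P.
  by rewrite big_nat1_cyclic ?prod_sub_prim_root // /G (prim_expr_order zP) expr0.
by rewrite -all [RHS](bigID (fun k => l %| k)%N) /= multiples mulrC.
Qed.

Lemma prod_tower_sub l v w z a Y (T : nat -> {poly F}) (b : nat -> F) :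
  (0 < l)%N -> (0 < v)%N -> (l ^ v).-primitive_root z ->
  (forall j, T j = Y ^+ (l ^ j)) -> (forall j, b j = a ^+ (l ^ j)) ->
  \prod_(i < l ^ v) (Y - (a * z ^+ i)%:P)
    * \prod_(1 <= j < w.+1) \prod_(1 <= k < (l ^ v).+1 | ~~ (l %| k)%N)
        (T j - (b j * z ^+ k)%:P)
  = Y ^+ (l ^ (v + w)) - (a ^+ (l ^ (v + w)))%:P.
Proof.
move=> l0 v0 zP hT hb; elim: w => [|w IH].
  by rewrite big_geq // mulr1 addn0 prod_sub_prim_root.
rewrite big_nat_recr //= mulrA IH mulrC hT hb.
have := prod_coprime_prim_root (a ^+ (l ^ w.+1)) (Y ^+ (l ^ w.+1)) l0 v0 zP.
by rewrite -!exprM -!expnD (_ : w.+1 + v.-1 = v + w)%N ?(addnC w.+1) //; lia.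
Qed.

Lemma prod_tower_add l v w z a Y (T : nat -> {poly F}) (b : nat -> F) :
  (0 < l)%N -> odd l -> (0 < v)%N -> (l ^ v).-primitive_root z ->
  (forall j, T j = Y ^+ (l ^ j)) -> (forall j, b j = a ^+ (l ^ j)) ->
  \prod_(i < l ^ v) (Y + (a * z ^+ i)%:P)
    * \prod_(1 <= j < w.+1) \prod_(1 <= k < (l ^ v).+1 | ~~ (l %| k)%N)
        (T j + (b j * z ^+ k)%:P)
  = Y ^+ (l ^ (v + w)) + (a ^+ (l ^ (v + w)))%:P.
Proof.
move=> l0 lo v0 zP hT hb; have oddl j : odd (l ^ j) by rewrite oddX lo orbT.
have hb' j : - b j = (- a) ^+ (l ^ j) by rewrite exprN_odd // hb.
have := prod_tower_sub w l0 v0 zP hT hb'; rewrite exprN_odd // polyCN opprK => <-.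
congr (_ * _).
  by apply: eq_bigr => i _; rewrite mulNr polyCN opprK.
by do 2!apply: eq_bigr => ? _; rewrite mulNr polyCN opprK.
Qed.

Lemma expr_inv_scale (c t lam : F) s E : c != 0 -> c ^+ (s * E) * lam = t ^+ E ->
  (c ^- s * t) ^+ E = lam.
Proof.
by move=> c0 cE; rewrite exprMn -cE exprVn -exprM mulrA mulVf ?mul1r // expf_neq0.
Qed.

Lemma invfVM (x y : F) : (x^-1 * y)^-1 = x * y^-1.
Proof. by rewrite invfM invrK. Qed.

Lemma invfVMM (x y z : F) : (x^-1 * y * z)^-1 = x * y^-1 * z^-1.
Proof. by rewrite !invfM invrK. Qed.

End Factorizations.

Section CodesAsIdeals.
Variable F : finFieldType.

Lemma rVpoly_constashift N (mu : F) (c : 'rV[F]_N) : (0 < N)%N ->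
  rVpoly (constashift mu c) = 'X * rVpoly c - (rVpoly c)`_N.-1 *: ('X^N - mu%:P).
Proof.
move=> N0; have coordE j : Defs.coord c j = (rVpoly c)`_j by rewrite coef_rVpoly.
apply/polyP=> k; rewrite coefB coefZ coefXM coefB coefXn coefC [LHS]coef_rVpoly.
case: insubP => [[i Hi] /= ik <-|]; rewrite ?mxE ?coordE /=.
  have [->|i0] := eqVneq i 0%N.
    have nN0 : (0 == N)%N = false by apply/eqP; lia.
    by rewrite nN0 (_ : false%:R = 0 :> F) // !sub0r mulrN opprK mulrC.
  by rewrite ltn_eqF // (_ : false%:R = 0 :> F) // !subr0 mulr0 subr0.
rewrite -leqNgt leq_eqVlt => /orP[/eqP <-|Nk].
  by rewrite gtn_eqF // eqxx (_ : true%:R = 1 :> F) // subr0 mulr1 subrr.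
have k0 : (0 < k)%N by lia.
rewrite !gtn_eqF // (_ : false%:R = 0 :> F) // subr0 mulr0 subr0 nth_default //.
by rewrite (leq_trans (size_poly _ _)) //; lia.
Qed.

Lemma in_idealE N (mu : F) (d : {poly F}) (c : 'rV[F]_N) : (0 < N)%N ->
  d %| 'X^N - mu%:P -> in_ideal mu d c <-> d %| rVpoly c.
Proof.
move=> N0 dv; split=> [[h ->]|/dvdpP[h E]]; first by rewrite -(dvdp_mod _ dv) dvdp_mulIl.
by exists h; rewrite mulrC -E modp_small // size_XnsubC // ltnS size_poly.
Qed.

Lemma constacyclic_generated_by N (mu : F) (d : {poly F}) (C : {set 'rV[F]_N}) :
  (0 < N)%N -> d %| 'X^N - mu%:P -> generated_by mu d C -> constacyclic mu C.
Proof.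
move=> N0 dv gen.
have memC c : c \in C <-> d %| rVpoly c := iff_trans (gen c) (in_idealE c N0 dv).
split; [split|].
- by apply/memC; rewrite linear0 dvdp0.
- move=> a x y /memC dx /memC dy; apply/memC; rewrite linearP /= -mul_polyC.
  by rewrite dvdp_add ?dvdp_mull.
- move=> c /memC dc; apply/memC; rewrite rVpoly_constashift //.
  by rewrite dvdp_sub ?dvdp_mull // -mul_polyC dvdp_mull.
Qed.

Lemma dotmx_coef N (c v : 'rV[F]_N.+1) :
  (c *m v^T) 0 0 = (rVpoly c * reciprocal N.+1 (rVpoly v))`_N.
Proof.
rewrite mxE coefM; apply: eq_bigr => j _; rewrite !mxE coef_rVpoly_ord coef_reciprocal /=.
rewrite ifT; last by have := ltn_ord j; lia.
by rewrite subKn ?coef_rVpoly_ord // -ltnS ltn_ord.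
Qed.

Lemma mem_dual_code L (lam : F) (g h : {poly F}) (C : {set 'rV[F]_L}) :
  (0 < L)%N -> lam != 0 -> g * h = 'X^L - lam%:P ->
  (forall c, c \in C <-> g %| rVpoly c) ->
  forall v, v \in dual_code C <-> revp h %| rVpoly v.
Proof.
case: L C => [//|L] C L0 lam0 gh memC v.
rewrite -(@dvdp_reciprocal _ L.+1) ?size_poly ?(coef0_cofactor L0 gh lam0) // inE.
set w := reciprocal L.+1 (rVpoly v); split=> [/forallP orth|hw].
  apply: (dvdp_cofactor L0 gh); first exact: size_poly.
  move=> i /andP[gi iL]; pose c : 'rV_L.+1 := poly_rV (g * 'X^(L - i)).
  have [g0 _] := cofactor_neq0 L0 gh.
  have sc : (size (g * 'X^(L - i))%R <= L.+1)%N.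
    rewrite size_mul ?expf_neq0 ?polyX_eq0 // size_polyXn.
    by move: gi iL (size_poly_gt0 g); rewrite g0; move: (size g) => ?; lia.
  have /implyP := orth c; rewrite (memC c) poly_rV_K // dvdp_mulIl dotmx_coef poly_rV_K //.
  move=> /(_ isT) /eqP; rewrite mulrAC coefMXn ifF ?subKn //; last by rewrite ltnNge leq_subr.
apply/forallP => c; apply/implyP => /memC /dvdpP[a E]; rewrite dotmx_coef E.
by apply/eqP; apply: (coef_mul_cofactor L0 gh); rewrite -?E ?size_poly.
Qed.

Lemma dual_code_generated_by L K (lam : F) (P g g' : {poly F}) (C : {set 'rV[F]_L}) :
  (0 < L)%N -> lam != 0 -> reciprocal_cofactor K P g g' -> P ^+ K = 'X^L - lam%:P ->
  generated_by lam g C ->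
  generated_by lam^-1 g' (dual_code C) /\ constacyclic lam^-1 (dual_code C).
Proof.
move=> L0 lam0 [h gh hg'] PK gen; rewrite PK in gh.
have memC c : c \in C <-> g %| rVpoly c.
  by apply: iff_trans (gen c) (in_idealE c L0 _); rewrite -gh dvdp_mulIl.
have dvg' : g' %| 'X^L - lam^-1%:P.
  have E : revp g * revp h = - lam *: ('X^L - lam^-1%:P) by rewrite -revpM gh revp_XnsubC.
  have nlam0 : - lam != 0 by rewrite oppr_eq0.
  by rewrite -(eqp_dvdl _ hg') -(dvdpZr _ _ nlam0) -E dvdp_mulIr.
have gen' : generated_by lam^-1 g' (dual_code C).
  move=> v; rewrite (in_idealE v L0 dvg') -(eqp_dvdl _ hg').
  exact: (mem_dual_code L0 lam0 gh memC).
by split; last exact: constacyclic_generated_by gen'.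
Qed.

End CodesAsIdeals.

Section DualCodeCases.
Variables (F : finFieldType) (p n N : nat) (lam : F) (C : {set 'rV[F]_N}).
Hypotheses (p_pr : prime p) (pF : p \in [pchar F]) (N0 : (0 < N)%N) (lam0 : lam != 0).

Lemma dual_code_prim_root_factors M s (c t delta : F) (b b' : nat -> F)
    (eps : nat -> nat) :
  M.-primitive_root delta -> (0 < s)%N -> c != 0 -> t != 0 ->
  (forall i, b i = c ^- s * t * delta ^+ i) -> (forall i, b' i = (b i)^-1) ->
  (forall i, i < M -> eps i <= p ^ n)%N ->
  N = (s * (M * p ^ n))%N -> c ^+ N * lam = t ^+ (M * p ^ n) ->
  generated_by lam (\prod_(i < M) ('X^s - (b i)%:P) ^+ eps i) C ->
  generated_by lam^-1 (\prod_(i < M) ('X^s - (b' i)%:P) ^+ (p ^ n - eps i)) (dual_code C)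
  /\ constacyclic lam^-1 (dual_code C).
Proof.
move=> dP s0 c0 t0 bE b'E epsK NE cE; rewrite NE in cE.
have d0 := prim_root_neq0 dP.
apply: (dual_code_generated_by N0 lam0).
  apply: reciprocal_cofactor_prod => i _ _; rewrite b'E.
  apply: reciprocal_cofactor_XnsubC; rewrite ?epsK // bE.
  by rewrite !mulf_neq0 ?invr_eq0 ?expf_neq0.
under eq_bigr do rewrite bE.
by rewrite prod_sub_prim_root // expr_sub_pchar // -!exprM (expr_inv_scale c0 cE) NE.
Qed.

Lemma dual_code_prim_root_factors_pm M s (c t delta : F) (b b' : nat -> F)
    (eps eps' : nat -> nat) :
  M.-primitive_root delta -> odd M -> (0 < s)%N -> c != 0 -> t != 0 ->
  (forall i, b i = c ^- s * t * delta ^+ i) -> (forall i, b' i = (b i)^-1) ->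
  (forall i, i < M -> eps i <= p ^ n /\ eps' i <= p ^ n)%N ->
  N = (s * (M * (2 * p ^ n)))%N -> c ^+ N * lam = t ^+ (M * (2 * p ^ n)) ->
  generated_by lam
    (\prod_(i < M) (('X^s - (b i)%:P) ^+ eps i * ('X^s + (b i)%:P) ^+ eps' i)) C ->
  generated_by lam^-1
    (\prod_(i < M) (('X^s - (b' i)%:P) ^+ (p ^ n - eps i)
                   * ('X^s + (b' i)%:P) ^+ (p ^ n - eps' i)))
    (dual_code C)
  /\ constacyclic lam^-1 (dual_code C).
Proof.
move=> dP oM s0 c0 t0 bE b'E epsK NE cE; rewrite NE in cE.
have b0 i : b i != 0 by rewrite bE !mulf_neq0 ?invr_eq0 ?expf_neq0 ?(prim_root_neq0 dP).
apply: (dual_code_generated_by N0 lam0).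
  apply: reciprocal_cofactor_prod => i _ _; have [e1 e2] := epsK i (ltn_ord i).
  by rewrite b'E; apply: reciprocal_cofactorM;
    [apply: reciprocal_cofactor_XnsubC | apply: reciprocal_cofactor_XnaddC].
under eq_bigr do rewrite bE.
rewrite big_split /= prod_sub_prim_root // prod_add_prim_root // -subr_sqr.
by rewrite -rmorphXn /= expr_sub_pchar // -!exprM (expr_inv_scale c0 cE) NE.
Qed.

Lemma dual_code_pm_tower_factors l v w (zeta c : F) (eps eps' : nat -> nat)
    (tau sig : nat -> nat -> nat) :
  odd l -> (0 < v)%N -> (l ^ v).-primitive_root zeta ->
  N = (2 * l ^ (v + w) * p ^ n)%N -> c != 0 -> c ^+ N * lam = 1 ->
  (forall i, i < l ^ v -> eps i <= p ^ n /\ eps' i <= p ^ n)%N ->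
  (forall j k, 1 <= j <= w -> 1 <= k <= l ^ v -> ~~ (l %| k) ->
      tau j k <= p ^ n /\ sig j k <= p ^ n)%N ->
  generated_by lam
    ((\prod_(i < l ^ v) (('X - (c^-1 * zeta ^+ i)%:P) ^+ eps i
                        * ('X + (c^-1 * zeta ^+ i)%:P) ^+ eps' i))
     * \prod_(1 <= j < w.+1)
         \prod_(1 <= k < (l ^ v).+1 | ~~ (l %| k)%N)
           (('X^(l ^ j) - (c ^- (l ^ j) * zeta ^+ k)%:P) ^+ tau j k
            * ('X^(l ^ j) + (c ^- (l ^ j) * zeta ^+ k)%:P) ^+ sig j k)) C ->
  generated_by lam^-1
    ((\prod_(i < l ^ v) (('X - (c * zeta ^- i)%:P) ^+ (p ^ n - eps i)
                        * ('X + (c * zeta ^- i)%:P) ^+ (p ^ n - eps' i)))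
     * \prod_(1 <= j < w.+1)
         \prod_(1 <= k < (l ^ v).+1 | ~~ (l %| k)%N)
           (('X^(l ^ j) - (c ^+ (l ^ j) * zeta ^- k)%:P) ^+ (p ^ n - tau j k)
            * ('X^(l ^ j) + (c ^+ (l ^ j) * zeta ^- k)%:P) ^+ (p ^ n - sig j k)))
    (dual_code C)
  /\ constacyclic lam^-1 (dual_code C).
Proof.
move=> lo v0 zP NE c0 cE epsK tauK.
have l0 : (0 < l)%N by rewrite lt0n; apply: contraTneq lo => ->.
have z0 := prim_root_neq0 zP.
have const0 e k : c ^- e * zeta ^+ k != 0 by rewrite mulf_neq0 ?invr_eq0 ?expf_neq0.
apply: (dual_code_generated_by N0 lam0).
  apply: reciprocal_cofactorM.
    apply: reciprocal_cofactor_prod => i _ _; have [e1 e2] := epsK i (ltn_ord i).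
    have := reciprocal_cofactor_XnsubC (ltn0Sn 0) (const0 1%N i) e1.
    have := reciprocal_cofactor_XnaddC (ltn0Sn 0) (const0 1%N i) e2.
    rewrite !invfVM !expr1 => rc2 rc1; exact (reciprocal_cofactorM rc1 rc2).
  apply: reciprocal_cofactor_prod => j; rewrite mem_index_iota ltnS => jw _.
  apply: reciprocal_cofactor_prod => k; rewrite mem_index_iota ltnS => kl lk.
  have [e1 e2] := tauK j k jw kl lk; have lj0 : (0 < l ^ j)%N by rewrite expn_gt0 l0.
  have := reciprocal_cofactor_XnsubC lj0 (const0 (l ^ j)%N k) e1.
  have := reciprocal_cofactor_XnaddC lj0 (const0 (l ^ j)%N k) e2.
  rewrite !invfVM => rc2 rc1; exact (reciprocal_cofactorM rc1 rc2).
have hb j : c ^- (l ^ j) = c^-1 ^+ (l ^ j) by rewrite exprVn.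
rewrite big_split /=; under [X in _ * X]eq_bigr do rewrite big_split /=.
rewrite big_split /= mulrACA (prod_tower_sub w l0 v0 zP (fun j => erefl) hb).
rewrite (prod_tower_add w l0 lo v0 zP (fun j => erefl) hb) -subr_sqr -rmorphXn /=.
rewrite expr_sub_pchar // -!exprM exprVn mulnCA mulnA -NE.
by rewrite -[lam](mulKf (expf_neq0 N c0)) cE mulr1.
Qed.

Lemma dual_code_square_tower_factors l u w (zeta xi c beta : F) (eps : nat -> nat)
    (sig : nat -> nat -> nat) :
  (0 < l)%N -> (0 < u)%N -> (l ^ u).-primitive_root zeta ->
  N = (2 * l ^ (u + w) * p ^ n)%N -> c != 0 ->
  c ^+ N * lam = xi ^+ (l ^ u * p ^ n) -> beta ^+ (l ^ (u + w)) * xi ^+ (l ^ u) = 1 ->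
  (forall i, i < l ^ u -> eps i <= p ^ n)%N ->
  (forall j k, 1 <= j <= w -> 1 <= k <= l ^ u -> ~~ (l %| k) -> sig j k <= p ^ n)%N ->
  generated_by lam
    ((\prod_(i < l ^ u) ('X^2 - (c ^- 2 * beta^-1 * zeta ^+ i)%:P) ^+ eps i)
     * \prod_(1 <= j < w.+1)
         \prod_(1 <= k < (l ^ u).+1 | ~~ (l %| k)%N)
           ('X^(2 * l ^ j) - (c ^- (2 * l ^ j) * beta ^- (l ^ j) * zeta ^+ k)%:P)
             ^+ sig j k) C ->
  generated_by lam^-1
    ((\prod_(i < l ^ u) ('X^2 - (c ^+ 2 * beta * zeta ^- i)%:P) ^+ (p ^ n - eps i))
     * \prod_(1 <= j < w.+1)
         \prod_(1 <= k < (l ^ u).+1 | ~~ (l %| k)%N)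
           ('X^(2 * l ^ j) - (c ^+ (2 * l ^ j) * beta ^+ (l ^ j) * zeta ^- k)%:P)
             ^+ (p ^ n - sig j k))
    (dual_code C)
  /\ constacyclic lam^-1 (dual_code C).
Proof.
move=> l0 u0 zP NE c0 cE betaE epsK sigK.
have b0 : beta != 0.
  by apply: contra_eq_neq betaE => ->; rewrite expr0n expn_eq0 gtn_eqF // mul0r eq_sym oner_neq0.
have z0 := prim_root_neq0 zP.
have const0 e f k : c ^- e * beta ^- f * zeta ^+ k != 0.
  by rewrite !mulf_neq0 ?invr_eq0 ?expf_neq0.
apply: (dual_code_generated_by N0 lam0).
  apply: reciprocal_cofactorM.
    apply: reciprocal_cofactor_prod => i _ _.
    have ci0 : c ^- 2 * beta^-1 * zeta ^+ i != 0 by rewrite !mulf_neq0 ?invr_eq0 ?expf_neq0.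
    have := reciprocal_cofactor_XnsubC (ltn0Sn 1) ci0 (epsK i (ltn_ord i)).
    by rewrite invfVMM !invrK => rc; exact rc.
  apply: reciprocal_cofactor_prod => j; rewrite mem_index_iota ltnS => jw _.
  apply: reciprocal_cofactor_prod => k; rewrite mem_index_iota ltnS => kl lk.
  have lj0 : (0 < 2 * l ^ j)%N by rewrite muln_gt0 expn_gt0 l0.
  have := reciprocal_cofactor_XnsubC lj0 (const0 (2 * l ^ j)%N (l ^ j)%N k) (sigK j k jw kl lk).
  by rewrite invfVMM invrK => rc; exact rc.
have hT j : 'X^(2 * l ^ j) = ('X^2 : {poly F}) ^+ (l ^ j) by rewrite exprM.
have hb j : c ^- (2 * l ^ j) * beta ^- (l ^ j) = (c ^- 2 * beta^-1) ^+ (l ^ j).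
  by rewrite exprMn !exprVn -exprM.
rewrite (prod_tower_sub w l0 u0 zP hT hb) expr_sub_pchar // -!exprM.
have invbetaE : beta^-1 ^+ (l ^ (u + w)) = xi ^+ (l ^ u).
  by rewrite exprVn -[xi ^+ _](mulKf (expf_neq0 (l ^ (u + w))%N b0)) betaE mulr1.
have cE' : c ^+ (2 * (l ^ (u + w) * p ^ n)) * lam = beta^-1 ^+ (l ^ (u + w) * p ^ n).
  by rewrite mulnA -NE cE exprM [RHS]exprM invbetaE.
by rewrite (expr_inv_scale c0 cE') mulnA -NE.
Qed.

End DualCodeCases.

Theorem corollary4p2 (F : finFieldType) (p q l m n : nat) (xi lam : F)
    (C : {set 'rV[F]_(2 * l ^ m * p ^ n)}) :
  prime p -> odd p -> p \in [pchar F] -> #|F| = q ->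
  (q.-1).-primitive_root xi ->
  prime l -> odd l -> l != p -> (l %| q.-1)%N ->
  (0 < m)%N -> (0 < n)%N ->
  lam != 0 ->
  constacyclic lam C ->
  let N := (2 * l ^ m * p ^ n)%N in
  let u := logn l q.-1 in
  let v := minn m u in
  let zeta := xi ^+ (q.-1 %/ l ^ v)%N in
  [/\
  (* (I) *)
  (forall (c1 : F) (eps eps' : nat -> nat) (tau sig : nat -> nat -> nat),
    c1 != 0 -> c1 ^+ N * lam = 1 ->
    (forall i, i < l ^ v -> eps i <= p ^ n /\ eps' i <= p ^ n)%N ->
    (forall j k, 1 <= j <= m - u -> 1 <= k <= l ^ v -> ~~ (l %| k) ->
        tau j k <= p ^ n /\ sig j k <= p ^ n)%N ->
    generated_by lam
      ((\prod_(i < l ^ v) (('X - (c1^-1 * zeta ^+ i)%:P) ^+ eps i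
                          * ('X + (c1^-1 * zeta ^+ i)%:P) ^+ eps' i))
       * \prod_(1 <= j < (m - u).+1)
           \prod_(1 <= k < (l ^ v).+1 | ~~ (l %| k)%N)
             (('X^(l ^ j) - (c1 ^- (l ^ j) * zeta ^+ k)%:P) ^+ tau j k
              * ('X^(l ^ j) + (c1 ^- (l ^ j) * zeta ^+ k)%:P) ^+ sig j k)) C ->
    generated_by lam^-1
      ((\prod_(i < l ^ v) (('X - (c1 * zeta ^- i)%:P) ^+ (p ^ n - eps i)
                          * ('X + (c1 * zeta ^- i)%:P) ^+ (p ^ n - eps' i)))
       * \prod_(1 <= j < (m - u).+1)
           \prod_(1 <= k < (l ^ v).+1 | ~~ (l %| k)%N)
             (('X^(l ^ j) - (c1 ^+ (l ^ j) * zeta ^- k)%:P) ^+ (p ^ n - tau j k)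
              * ('X^(l ^ j) + (c1 ^+ (l ^ j) * zeta ^- k)%:P) ^+ (p ^ n - sig j k)))
      (dual_code C)
    /\ constacyclic lam^-1 (dual_code C)),
  (* (II.A) *)
  (forall (c2 : F) (eps : nat -> nat),
    (m <= u)%N -> c2 != 0 -> c2 ^+ N * lam = xi ^+ (l ^ v * p ^ n) ->
    let alpha := xi ^+ (q.-1 %/ l ^ m)%N in
    (forall i, i < l ^ m -> eps i <= p ^ n)%N ->
    generated_by lam
      (\prod_(i < l ^ m) ('X^2 - (c2 ^- 2 * xi * alpha ^+ i)%:P) ^+ eps i) C ->
    generated_by lam^-1
      (\prod_(i < l ^ m) ('X^2 - (c2 ^+ 2 * xi^-1 * alpha ^- i)%:P) ^+ (p ^ n - eps i))
      (dual_code C)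
    /\ constacyclic lam^-1 (dual_code C)),
  (* (II.B) *)
  (forall (c2 beta : F) (eps : nat -> nat) (sig : nat -> nat -> nat),
    (u < m)%N -> c2 != 0 -> c2 ^+ N * lam = xi ^+ (l ^ v * p ^ n) ->
    (exists k : nat, beta = (xi ^+ (l ^ u)) ^+ k) ->
    beta ^+ (l ^ m) * xi ^+ (l ^ u) = 1 ->
    (forall i, i < l ^ u -> eps i <= p ^ n)%N ->
    (forall j k, 1 <= j <= m - u -> 1 <= k <= l ^ u -> ~~ (l %| k) ->
        sig j k <= p ^ n)%N ->
    generated_by lam
      ((\prod_(i < l ^ u) ('X^2 - (c2 ^- 2 * beta^-1 * zeta ^+ i)%:P) ^+ eps i)
       * \prod_(1 <= j < (m - u).+1)
           \prod_(1 <= k < (l ^ u).+1 | ~~ (l %| k)%N)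
             ('X^(2 * l ^ j) - (c2 ^- (2 * l ^ j) * beta ^- (l ^ j) * zeta ^+ k)%:P)
               ^+ sig j k) C ->
    generated_by lam^-1
      ((\prod_(i < l ^ u) ('X^2 - (c2 ^+ 2 * beta * zeta ^- i)%:P) ^+ (p ^ n - eps i))
       * \prod_(1 <= j < (m - u).+1)
           \prod_(1 <= k < (l ^ u).+1 | ~~ (l %| k)%N)
             ('X^(2 * l ^ j) - (c2 ^+ (2 * l ^ j) * beta ^+ (l ^ j) * zeta ^- k)%:P)
               ^+ (p ^ n - sig j k))
      (dual_code C)
    /\ constacyclic lam^-1 (dual_code C)),
  (* (III.A) *)
  (forall (j y z : nat) (d1 : F) (eps : nat -> nat),
    (1 <= j <= 2 * l ^ v - 1)%N -> j != (l ^ v)%N ->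
    d1 != 0 -> d1 ^+ N * lam = xi ^+ (j * p ^ n) ->
    j = (y * l ^ z)%N -> coprime y l -> (z <= v - 1)%N ->
    let delta := xi ^+ (q.-1 %/ l ^ z)%N in
    odd y ->
    (forall i, i < l ^ z -> eps i <= p ^ n)%N ->
    generated_by lam
      (\prod_(i < l ^ z)
         ('X^(2 * l ^ (m - z)) - (d1 ^- (2 * l ^ (m - z)) * delta ^+ i * xi ^+ y)%:P)
           ^+ eps i) C ->
    generated_by lam^-1
      (\prod_(i < l ^ z)
         ('X^(2 * l ^ (m - z)) - (d1 ^+ (2 * l ^ (m - z)) * delta ^- i * xi ^- y)%:P)
           ^+ (p ^ n - eps i))
      (dual_code C)
    /\ constacyclic lam^-1 (dual_code C)) &
  (* (III.B) *)
  (forall (j y z y0 : nat) (d1 : F) (eps eps' : nat -> nat),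
    (1 <= j <= 2 * l ^ v - 1)%N -> j != (l ^ v)%N ->
    d1 != 0 -> d1 ^+ N * lam = xi ^+ (j * p ^ n) ->
    j = (y * l ^ z)%N -> coprime y l -> (z <= v - 1)%N ->
    let delta := xi ^+ (q.-1 %/ l ^ z)%N in
    y = (2 * y0)%N ->
    (forall i, i < l ^ z -> eps i <= p ^ n /\ eps' i <= p ^ n)%N ->
    generated_by lam
      (\prod_(i < l ^ z)
         (('X^(l ^ (m - z)) - (d1 ^- (l ^ (m - z)) * delta ^+ i * xi ^+ y0)%:P) ^+ eps i
          * ('X^(l ^ (m - z)) + (d1 ^- (l ^ (m - z)) * delta ^+ i * xi ^+ y0)%:P) ^+ eps' i))
      C ->
    generated_by lam^-1
      (\prod_(i < l ^ z)
         (('X^(l ^ (m - z)) - (d1 ^+ (l ^ (m - z)) * delta ^- i * xi ^- y0)%:P)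
            ^+ (p ^ n - eps i)
          * ('X^(l ^ (m - z)) + (d1 ^+ (l ^ (m - z)) * delta ^- i * xi ^- y0)%:P)
            ^+ (p ^ n - eps' i)))
      (dual_code C)
    /\ constacyclic lam^-1 (dual_code C))
  ].
Proof.
move=> p_pr _ pF _ xiP l_pr l_odd _ l_dvd m0 _ lam0 _ N u v zeta.
have q1 : (0 < q.-1)%N := prim_order_gt0 xiP.
have xi0 := prim_root_neq0 xiP.
have l0 : (0 < l)%N := prime_gt0 l_pr.
have u0 : (0 < u)%N by rewrite -(pfactor_dvdn 1 l_pr q1) expn1.
have v0 : (0 < v)%N by rewrite /v; lia.
have N0 : (0 < N)%N by rewrite /N !muln_gt0 !expn_gt0 l0 (prime_gt0 p_pr).
have rootP k : (k <= u)%N -> (l ^ k).-primitive_root (xi ^+ (q.-1 %/ l ^ k)).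
  by move=> ku; apply: (dvdn_prim_root xiP); rewrite pfactor_dvdn.
have zetaP : (l ^ v).-primitive_root zeta := rootP v (geq_minr m u).
have z_le z : (z <= v - 1 -> z <= u /\ z <= m)%N by rewrite /v; lia.
split.
- move=> c1 eps eps' tau sig c10 c1E epsK tauK.
  apply: (dual_code_pm_tower_factors p_pr pF N0 lam0 l_odd v0 zetaP) => //.
  by rewrite /N /v; congr (2 * l ^ _ * _)%N; lia.
- move=> c2 eps mu c20 c2E alpha epsK.
  have vm : v = m by apply/minn_idPl.
  apply: (dual_code_prim_root_factors p_pr pF N0 lam0 (rootP m mu) (isT : 0 < 2)%N c20 xi0
    (b := fun i => c2 ^- 2 * xi * alpha ^+ i) (fun i => erefl) (fun i => esym (invfVMM _ _ _))
    epsK); first by rewrite /N mulnA.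
  by rewrite -vm.
- move=> c2 beta eps sig um c20 c2E _ betaE epsK sigK.
  have vu : v = u by apply/minn_idPr; exact: ltnW.
  have mE : m = (u + (m - u))%N by lia.
  rewrite vu in zetaP c2E; rewrite mE in betaE.
  apply: (dual_code_square_tower_factors p_pr pF N0 lam0 l0 u0 zetaP _ c20 c2E betaE
    epsK sigK).
  by rewrite -mE.
- move=> j y z d1 eps _ _ d10 d1E jE _ /z_le[zu zm] delta _ epsK.
  apply: (dual_code_prim_root_factors p_pr pF N0 lam0 (rootP z zu) _ d10 (expf_neq0 y xi0)
    (b := fun i => d1 ^- (2 * l ^ (m - z)) * delta ^+ i * xi ^+ y)
    (fun i => mulrAC _ _ _) (fun i => esym (invfVMM _ _ _)) epsK).
  + by rewrite muln_gt0 expn_gt0 l0.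
  + by rewrite /N -{1}(subnK zm) expnD; ring.
  + by rewrite d1E -exprM jE mulnA.
- move=> j y z y0 d1 eps eps' _ _ d10 d1E jE _ /z_le[zu zm] delta yE epsK.
  have lz_odd : odd (l ^ z) by rewrite oddX l_odd orbT.
  apply: (dual_code_prim_root_factors_pm p_pr pF N0 lam0 (rootP z zu) lz_odd _ d10
    (expf_neq0 y0 xi0) (b := fun i => d1 ^- (l ^ (m - z)) * delta ^+ i * xi ^+ y0)
    (fun i => mulrAC _ _ _) (fun i => esym (invfVMM _ _ _)) epsK).
  + by rewrite expn_gt0 l0.
  + by rewrite /N -{1}(subnK zm) expnD; ring.
  + by rewrite d1E -exprM jE yE; congr (_ ^+ _); ring.
Qed.
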